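(* Consider $N$ identical discrete-time linear systems \[ x_k(t+1) = A x_k(t) + B u_k(t),\qquad t=1,2,\dots,\quad k=1,\dots,N, \] with $x_k\in\mathbb{R}^n$, where $B$ is an $n\times n$ nonsingular matrix and all eigenvalues of $A$ lie on the unit circle in the complex plane. Let the communication graph $\mathcal{G}(t)$ be uniformly connected with bounded Laplacian $L(t)=[l_{kj}(t)]$. Then the control law \[ u_k(t) = -\epsilon_k B^{-1}A\sum_{j=1}^N l_{kj}(t)\,x_j(t),\qquad \epsilon_k\in(0,1/d_k^{in}),\quad k=1,\dots,N, \] exponentially synchronizes all the solutions to a solution of $x_0(t+1)=Ax_0(t)$.
   Context: Communication graph: a time-varying weighted digraph $\mathcal{G}(t)$ on nodes $v_1,\dots,v_N$ with weighted adjacency matrix $A_d(t)=[a_{kj}(t)]$, bounded, with $a_{kj}(t)\in\{0\}\cup[\eta,\gamma]$ for fixed $0<\eta\le\gamma$ and $a_{kk}(t)=0$. There is an edge $\{v_k,v_j\}$ at time $t$ (and $v_j$ is a neighbor of $v_k$) iff $a_{kj}(t)\ge\eta$. A path is a sequence of vertices such that each next vertex is a neighbor of the previous one. The Laplacian $L(t)$ has $l_{kk}=\sum_i a_{ki}$, $l_{kj}=-a_{kj}$ ($j\ne k$); the in-degree of node $k$ is $d_k^{in}=\sum_j a_{kj}$. A node $v_j$ is connected to $v_k$ across an interval $I$ if there is a path from $v_j$ to $v_k$ respecting edge orientations in the digraph with edge set $\bigcup_{t\in I}\mathcal{E}(t)$. $\mathcal{G}(t)$ is uniformly connected if there exist $T>0$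 and an index $k$ such that for all $t$ every node $v_j$ ($j\ne k$) is connected to $v_k$ across $[t,t+T]$. Exponential synchronization means there is a solution $x_0(\cdot)$ of $x_0(t+1)=Ax_0(t)$ with $\|x_k(t)-x_0(t)\|\to0$ exponentially fast (geometrically) for every $k$. *)

From HB Require Import structures.
From mathcomp Require Import all_boot all_order all_algebra.
From mathcomp Require Import reals complex.
Set Implicit Arguments. Unset Strict Implicit. Unset Printing Implicit Defensive.
Import Order.TTheory GRing.Theory Num.Theory.
Local Open Scope ring_scope.

Definition eig_on_unit_circle (R : realType) (n : nat) (A : 'M[R]_n) : Prop :=
  forall z : R[i], eigenvalue (map_mx (real_complex R) A) z -> `|z| = 1.

Definition adjacency_ok (R : realType) (N : nat) (eta gamma : R)
    (a : nat -> 'M[R]_N) : Prop :=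
  0 < eta /\ eta <= gamma /\
  forall t (k j : 'I_N),
    (a t k k = 0) /\ (a t k j = 0 \/ (eta <= a t k j /\ a t k j <= gamma)).

Definition laplacian (R : realType) (N : nat) (a : nat -> 'M[R]_N) (t : nat)
  : 'M[R]_N :=
  \matrix_(k, j) (if k == j then \sum_i a t k i else - a t k j).

Definition in_degree (R : realType) (N : nat) (a : nat -> 'M[R]_N)
    (t : nat) (k : 'I_N) : R := \sum_j a t k j.

Definition union_edge (R : realType) (N : nat) (eta : R) (a : nat -> 'M[R]_N)
    (t T : nat) : rel 'I_N :=
  fun p q => [exists s : 'I_T.+1, eta <= a (t + s)%N p q].

(* v_j is connected to v_k across [t, t+T]: there is a path v_j, ..., v_k
   in which each next vertex is a neighbour of the previous one, in the
   digraph with edge set the union of the edge sets over [t, t+T]. *)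
Definition connected_across (R : realType) (N : nat) (eta : R)
    (a : nat -> 'M[R]_N) (t T : nat) (j k : 'I_N) : bool :=
  connect (union_edge eta a t T) j k.

Definition uniformly_connected (R : realType) (N : nat) (eta : R)
    (a : nat -> 'M[R]_N) : Prop :=
  exists (T : nat) (k : 'I_N), (0 < T)%N /\
    forall (t : nat) (j : 'I_N), j != k -> connected_across eta a t T j k.

Definition vnorm (R : realType) (n : nat) (v : 'cV[R]_n) : R :=
  \big[Num.max/0]_(i < n) `|v i 0|.

Definition exp_synchronizes (R : realType) (n N : nat) (A : 'M[R]_n)
    (x : 'I_N -> nat -> 'cV[R]_n) : Prop :=
  exists x0 : nat -> 'cV[R]_n,
    (forall t, x0 t.+1 = A *m x0 t) /\
    exists (c rho : R), 0 <= rho /\ rho < 1 /\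
      forall (k : 'I_N) (t : nat), vnorm (x k t - x0 t) <= c * rho ^+ t.

(* Writing the control law out, the closed loop reads x_k(t+1) = A sum_j p_kj(t) x_j(t)
   for a row-stochastic matrix P(t) whose diagonal entries and entries on edges are
   bounded below by some g > 0.  Hence x_k(t) = A^t y_k(t), where y(t+1) = P(t) y(t) is a
   consensus iteration.  Along a uniformly connected graph positivity spreads from the
   root to every agent within (N - 1)(T + 1) steps, so over each such window the spread
   max_k - min_k of every coordinate of y contracts by the factor 1 - g^((N-1)(T+1)), and
   y converges geometrically, at some rate rho < 1, to a common limit y*.  As the spectrum
   of A lies on the unit circle, A^t grows slower than mu^t for every mu > 1; taking
   mu rho < 1, x_k(t) - A^t y* decays geometrically. *)

From HB Require Import structures.
From mathcomp Require Import all_boot all_order all_algebra.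
From mathcomp Require Import reals complex.
From mathcomp Require Import ring lra zify.
Import Order.TTheory GRing.Theory Num.Theory.
Local Open Scope ring_scope.

Lemma finite_norm_bound {F : numDomainType} {I : finType} (c : I -> F) :
  exists2 C, 0 <= C & forall i, `|c i| <= C.
Proof.
exists (\sum_i `|c i|) => [|i]; first exact: sumr_ge0.
by rewrite (bigD1 i) //= lerDl sumr_ge0.
Qed.

(** * Powers of a matrix with spectrum on the unit circle *)

Definition mx_geom_bounded {F : numDomainType} {m n} (V : nat -> 'M[F]_(m, n))
    (mu : F) : Prop :=
  exists2 K, 0 <= K & forall t i j, `|V t i j| <= K * mu ^+ t.

Lemma geometric_recurrence_bound {F : numFieldType} {u w : nat -> F} {z mu K : F} :
  `|z| = 1 -> 1 < mu -> 0 <= K -> (forall t, u t.+1 = z * u t + w t) ->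
  (forall t, `|w t| <= K * mu ^+ t) ->
  forall t, `|u t| <= (`|u 0%N| + K / (mu - 1)) * mu ^+ t.
Proof.
move=> z1 mu1 K0 u_rec w_le; have mu0 : 0 < mu by apply: lt_trans mu1.
have mu1_neq0 : mu - 1 != 0 by rewrite subr_eq0 gt_eqF.
elim=> [|t IH]; first by rewrite expr0 mulr1 lerDl divr_ge0 // subr_ge0 ltW.
set c := _ + _ in IH *.
have -> : c * mu ^+ t.+1 =
    c * mu ^+ t + K * mu ^+ t + `|u 0%N| * (mu - 1) * mu ^+ t.
  by rewrite /c exprS; field.
rewrite u_rec; apply: (le_trans (ler_normD _ _)); rewrite normrM z1 mul1r.
apply: le_trans (lerD IH (w_le t)) _.
rewrite lerDl; apply: mulr_ge0; last by rewrite exprn_ge0 // ltW.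
by rewrite mulr_ge0 // subr_ge0 ltW.
Qed.

Lemma mx_geom_bounded_rec {F : numFieldType} {m n} (V W : nat -> 'M[F]_(m, n))
    z mu :
  `|z| = 1 -> 1 < mu -> (forall t, V t.+1 = z *: V t + W t) ->
  mx_geom_bounded W mu -> mx_geom_bounded V mu.
Proof.
move=> z1 mu1 V_rec [K K0 W_le]; have mu0 : 0 < mu by apply: lt_trans mu1.
have [C C0 V0_le] := finite_norm_bound (fun ij : 'I_m * 'I_n => V 0%N ij.1 ij.2).
exists (C + K / (mu - 1)) => [|t i j].
  by rewrite addr_ge0 // divr_ge0 // subr_ge0 ltW.
have Vij_rec s : V s.+1 i j = z * V s i j + W s i j by rewrite V_rec !mxE.
apply: le_trans (@geometric_recurrence_bound F (fun s => V s i j)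
  (fun s => W s i j) z mu K z1 mu1 K0 Vij_rec (fun s => W_le s i j) t) _.
apply: ler_wpM2r; first by rewrite exprn_ge0 // ltW.
by rewrite lerD2r; apply: (V0_le (i, j)).
Qed.

Lemma expmx_mul_prod_geom_bounded {F : numFieldType} {n} (M : 'M[F]_n.+1) mu
    (s : seq F) :
  1 < mu -> all (fun z => `|z| == 1) s ->
  mx_geom_bounded (fun t => M ^+ t * \prod_(z <- s) (M - z%:M)) mu ->
  mx_geom_bounded (fun t => M ^+ t) mu.
Proof.
move=> mu1; elim: s => [|z s IH] /=.
  by move=> _ [K K0 le_K]; exists K => // t i j; have := le_K t i j; rewrite big_nil mulr1.
move=> /andP[/eqP z1 s1] bounded; apply: IH => //.
apply: mx_geom_bounded_rec z1 mu1 _ bounded => t.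
rewrite big_cons mulrA mulrBr exprSr -mulrA -scalemx1 -scalerAr mulr1.
by rewrite mulrBl scalerAl addrC subrK mulrA.
Qed.

Lemma expmx_unit_circle_bounded {R : realType} {n} {A : 'M[R]_n} {mu : R} :
  eig_on_unit_circle A -> 1 < mu -> mx_geom_bounded (fun t => A ^+ t) mu.
Proof.
case: n A => [|n] A eigA mu1; first by exists 0 => // t [].
pose Ac := map_mx (real_complex R) A.
have [rs char_Ac] := closed_field_poly_normal (char_poly Ac).
rewrite (monicP (char_poly_monic Ac)) scale1r in char_Ac.
have prod_eq0 : \prod_(z <- rs) (Ac - z%:M) = 0.
  rewrite -(Cayley_Hamilton Ac) char_Ac rmorph_prod; apply: eq_bigr => z _.
  by rewrite rmorphB /= horner_mx_X horner_mx_C.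
have rs1 : all (fun z => `|z| == 1) rs.
  apply/allP => z z_rs; apply/eqP/eigA.
  by rewrite eigenvalue_root_char char_Ac root_prod_XsubC.
have muC1 : 1 < mu%:C%C by rewrite -[1]/(1%:C)%C ltcR.
have [K K0 AcX_le] : mx_geom_bounded (fun t => Ac ^+ t) mu%:C%C.
  apply: expmx_mul_prod_geom_bounded muC1 rs1 _.
  by exists 0 => // t i j; rewrite prod_eq0 mulr0 mxE normr0 mul0r.
have AcX t : Ac ^+ t = map_mx (real_complex R) (A ^+ t).
  by elim: t => [|t IH]; rewrite ?expr0 ?map_mx1 // !exprS IH map_mxM.
(* [K] is a nonnegative, hence real, complex number *)
pose KR := Num.sqrt (complex.Re K ^+ 2 + complex.Im K ^+ 2).
exists KR; first exact: sqrtr_ge0.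
move=> t i j; have := le_trans (normc_ge_Re _) (AcX_le t i j).
by rewrite AcX mxE /= -(ger0_norm K0) normc_def -rmorphXn -rmorphM lecR.
Qed.

(** * Spreading of positivity along a uniformly connected graph *)

Lemma connect_exit_edge {T : finType} {e : rel T} {S : {set T}} {p q} :
  connect e p q -> p \notin S -> q \in S ->
  exists x y, [/\ x \notin S, y \in S & e x y].
Proof.
move=> /connectP[s e_s ->]; elim: s p e_s => [|y s IH] p /=.
  by move=> _ /negP.
move=> /andP[e_py e_s] pNS last_S; case yS: (y \in S); first by exists p, y.
by apply: IH e_s _ last_S; rewrite yS.
Qed.

Section Spreading.

Context {R : realType} {N T : nat} {r : 'I_N} {eta g : R} {a P : nat -> 'M[R]_N}.
Hypotheses (P_ge0 : forall t i j, 0 <= P t i j)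
  (P_diag : forall t i, g <= P t i i)
  (P_edge : forall t i j, eta <= a t i j -> g <= P t i j)
  (g_ge0 : 0 <= g)
  (a_conn : forall t j, j != r -> connected_across eta a t T j r).
Context {w : nat -> 'I_N -> R} {t0 : nat}.
Hypotheses (w_rec : forall t j, w t.+1 j = \sum_i P t j i * w t i)
  (w_ge0 : forall j, 0 <= w t0 j).

Let w_ge0_after k i : 0 <= w (t0 + k)%N i.
Proof.
elim: k i => [|k IH] i; first by rewrite addn0.
by rewrite addnS w_rec sumr_ge0 // => l _; rewrite mulr_ge0.
Qed.

Let w_step k i j : P (t0 + k)%N j i * w (t0 + k)%N i <= w (t0 + k).+1 j.
Proof.
rewrite w_rec (bigD1 i) //= lerDl sumr_ge0 // => l _.
by rewrite mulr_ge0 ?w_ge0_after.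
Qed.

Let w_persist k s j : g ^+ s * w (t0 + k)%N j <= w (t0 + k + s)%N j.
Proof.
elim: s j => [|s IH] j; first by rewrite expr0 mul1r addn0.
rewrite addnS exprS -mulrA -addnA; apply: le_trans (w_step (k + s) j j).
apply: ler_pM; rewrite ?mulr_ge0 ?exprn_ge0 ?w_ge0_after //.
by have := IH j; rewrite addnA.
Qed.

(* Each window of length [T + 1] adds an agent to this set unless it is already full:
   the set contains the root, so some edge active in the window enters it from outside. *)
Let reached m := [set j | g ^+ (m * T.+1) * w t0 r <= w (t0 + m * T.+1)%N j].

Let reached_sub m : reached m \subset reached m.+1.
Proof.
apply/subsetP => j; rewrite !inE => j_reached.
have := w_persist (m * T.+1) T.+1 j; rewrite -addnA -mulSnr; apply: le_trans.
by rewrite mulSnr exprD mulrAC [_ * g ^+ T.+1]mulrC ler_wpM2l ?exprn_ge0.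
Qed.

Let root_reached m : r \in reached m.
Proof. by rewrite inE; have := w_persist 0 (m * T.+1) r; rewrite !addn0. Qed.

Let edge_reached m x y s : y \in reached m ->
  eta <= a (t0 + m * T.+1 + s)%N x y -> (s <= T)%N -> x \in reached m.+1.
Proof.
rewrite !inE => y_reached a_xy sT.
pose t1 := (m * T.+1 + s)%N.
have -> : (t0 + m.+1 * T.+1 = t0 + t1.+1 + (T - s))%N by rewrite /t1; nia.
apply: le_trans (w_persist t1.+1 (T - s) x).
have -> : g ^+ (m.+1 * T.+1) = g ^+ (T - s) * (g * (g ^+ s * g ^+ (m * T.+1))).
  by rewrite -exprD -exprS -exprD; congr (_ ^+ _); nia.
rewrite -!mulrA ler_wpM2l ?exprn_ge0 // addnS; apply: le_trans (w_step t1 y x).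
have wr_ge0 : 0 <= w t0 r by have := w_ge0_after 0 r; rewrite addn0.
apply: ler_pM; rewrite ?mulr_ge0 ?exprn_ge0 //; first by apply: P_edge; rewrite addnA.
rewrite /t1 addnA; apply: le_trans (w_persist _ s y).
by rewrite ler_wpM2l ?exprn_ge0.
Qed.

Let reached_grow m : reached m != setT -> reached m \proper reached m.+1.
Proof.
move=> reached_NT; have [p pN] : exists p, p \notin reached m.
  apply/existsP; apply: contraR reached_NT; rewrite negb_exists => /forallP pN.
  by rewrite eqEsubset subsetT; apply/subsetP => x _; have := pN x; rewrite negbK.
have pr : p != r by apply: contraNneq pN => ->.
have [x [y [xN yR /existsP[s a_xy]]]] :=
  connect_exit_edge (a_conn (t0 + m * T.+1) p pr) pN (root_reached m).
apply/properP; split => //; exists x => //.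
by apply: edge_reached yR a_xy _; rewrite -ltnS ltn_ord.
Qed.

Let reached_card m : reached m = setT \/ (m < #|reached m|)%N.
Proof.
elim: m => [|m IH]; first by right; rewrite card_gt0; apply/set0Pn; exists r.
have [Rm | NT] := eqVneq (reached m) setT.
  by left; apply/eqP; rewrite eqEsubset subsetT -Rm reached_sub.
case: IH => [/eqP|IH]; first by rewrite (negbTE NT).
by right; apply: leq_ltn_trans IH _; apply/proper_card/reached_grow.
Qed.

Lemma spread_lower_bound j :
  g ^+ (N.-1 * T.+1) * w t0 r <= w (t0 + N.-1 * T.+1)%N j.
Proof.
suff : j \in reached N.-1 by rewrite inE.
have N_gt0 : (0 < N)%N by apply: leq_ltn_trans (leq0n r) (ltn_ord r).
suff -> : reached N.-1 = setT by rewrite inE.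
case: (reached_card N.-1) => // card_gt.
by rewrite prednK // in card_gt; apply/eqP; rewrite eqEcard subsetT cardsT card_ord.
Qed.

End Spreading.

(** * Geometric consensus for products of stochastic matrices *)

Lemma bernoulli_ineq {F : realFieldType} {x : F} (k : nat) :
  0 <= x -> x <= 1 -> 1 - k%:R * x <= (1 - x) ^+ k.
Proof.
move=> x_ge0 x_le1; elim: k => [|k IH]; first by rewrite mul0r subr0 expr0.
rewrite exprS; apply: le_trans (ler_wpM2l _ IH); last by rewrite subr_ge0.
have : 0 <= k%:R * (x * x) :> F by rewrite !mulr_ge0.
by rewrite -natr1; nra.
Qed.

Lemma nested_intervals {R : realType} {lo hi : nat -> R} :
  {homo lo : s t / (s <= t)%N >-> s <= t} ->
  {homo hi : s t / (s <= t)%N >-> t <= s} ->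
  (forall t, lo t <= hi t) ->
  exists l, forall t, lo t <= l <= hi t.
Proof.
move=> lo_mono hi_mono lo_hi.
pose E : classical_sets.set R := fun y => exists t, y = lo t.
have E_n0 : classical_sets.nonempty E by exists (lo 0%N), 0%N.
have hi_ub t : classical_sets.ubound E (hi t).
  move=> _ [s ->]; apply: le_trans (lo_mono _ _ (leq_maxl s t)) _.
  exact: le_trans (lo_hi _) (hi_mono _ _ (leq_maxr s t)).
exists (sup E) => t; apply/andP; split; last exact: ge_sup.
by apply: sup_upper_bound; [split; last exists (hi 0%N) | exists t].
Qed.

Lemma geometric_rate_of_period {F : realFieldType} {D : nat -> F} {p : nat} {c rho : F} :
  (0 < p)%N -> 0 <= c -> 0 < rho -> rho <= 1 -> c <= rho ^+ p ->
  (forall t, 0 <= D t) -> {homo D : s t / (s <= t)%N >-> t <= s} ->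
  (forall q, D (q.+1 * p)%N <= c * D (q * p)%N) ->
  forall t, D t <= D 0%N / rho ^+ p * rho ^+ t.
Proof.
move=> p_gt0 c_ge0 rho_gt0 rho_le1 c_le D_ge0 D_mono D_period t.
have D_geom q : D (q * p)%N <= rho ^+ (p * q) * D 0%N.
  elim: q => [|q IH]; first by rewrite mul0n muln0 expr0 mul1r.
  apply: le_trans (D_period q) _; rewrite mulnS exprD -mulrA.
  by apply: ler_pM => //; exact: le_trans (D_ge0 _) IH.
pose q := (t %/ p)%N.
have t_le : (t <= p * q + p)%N by have := ltn_pmod t p_gt0; rewrite {1}(divn_eq t p); nia.
apply: le_trans (D_mono (q * p)%N t _) _; first by rewrite leq_divM.
apply: le_trans (D_geom q) _.
rewrite mulrAC ler_pdivlMr ?exprn_gt0 // mulrAC -exprD [X in _ <= X]mulrC.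
by rewrite ler_wpM2r // (ler_wiXn2l (ltW rho_gt0) rho_le1 t_le).
Qed.

Definition geometric_consensus {R : realType} {N : nat} (P : nat -> 'M[R]_N) (rho : R) :=
  forall z : nat -> 'I_N -> R,
    (forall t j, z t.+1 j = \sum_i P t j i * z t i) ->
    exists ys C, forall t j, `|z t j - ys| <= C * rho ^+ t.

Section Consensus.

Context {R : realType} {N T : nat} {r : 'I_N} {eta g : R} {a P : nat -> 'M[R]_N}.
Hypotheses (P_ge0 : forall t i j, 0 <= P t i j)
  (P_sum1 : forall t i, \sum_j P t i j = 1)
  (P_diag : forall t i, g <= P t i i)
  (P_edge : forall t i j, eta <= a t i j -> g <= P t i j)
  (g_gt0 : 0 < g)
  (a_conn : forall t j, j != r -> connected_across eta a t T j r).

Let L := (N.-1 * T.+1)%N.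
Let beta := g ^+ L.

Let beta_le1 : beta <= 1.
Proof.
apply: exprn_ile1; first exact: ltW.
by rewrite -(P_sum1 0 r) (bigD1 r) //= (le_trans (P_diag 0 r)) // lerDl sumr_ge0.
Qed.

Section Trajectory.

Context {z : nat -> 'I_N -> R}.
Hypothesis z_rec : forall t j, z t.+1 j = \sum_i P t j i * z t i.

Let zmax t := \big[Num.max/z t r]_j z t j.
Let zmin t := \big[Num.min/z t r]_j z t j.
Let diam t := zmax t - zmin t.

Let affine_rec (u v : R) t j :
  u * z t.+1 j + v = \sum_i P t j i * (u * z t i + v).
Proof.
rewrite z_rec mulr_sumr; under [RHS]eq_bigr do rewrite mulrDr mulrCA.
by rewrite big_split /= -mulr_suml P_sum1 mul1r.
Qed.

Let step_ge0 (u v : R) t j : (forall i, 0 <= u * z t i + v) -> 0 <= u * z t.+1 j + v.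
Proof. by move=> ge0; rewrite affine_rec sumr_ge0 // => i _; rewrite mulr_ge0. Qed.

Let zmax_nonincr : {homo zmax : s t / (s <= t)%N >-> t <= s}.
Proof.
apply: homo_leq => [//|y x w yx wy|t]; first exact: le_trans wy yx.
suff le_zmax j : z t.+1 j <= zmax t by apply: bigmax_le.
rewrite -subr_ge0 addrC -mulN1r; apply: step_ge0 => i.
by rewrite mulN1r addrC subr_ge0 le_bigmax.
Qed.

Let zmin_nondecr : {homo zmin : s t / (s <= t)%N >-> s <= t}.
Proof.
apply: homo_leq => [//|y x w xy yw|t]; first exact: le_trans xy yw.
suff ge_zmin j : zmin t <= z t.+1 j by apply: le_bigmin.
rewrite -subr_ge0 -[z _ _]mul1r; apply: step_ge0 => i.
by rewrite mul1r subr_ge0 bigmin_le.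
Qed.

Let diam_ge0 t : 0 <= diam t.
Proof.
by rewrite subr_ge0; apply: (@le_trans _ _ (z t r)); [apply: bigmin_le | apply: le_bigmax].
Qed.

Let diam_contract t0 : diam (t0 + L)%N <= (1 - beta) * diam t0.
Proof.
have spread u v : (forall j, 0 <= u * z t0 j + v) ->
    forall j, beta * (u * z t0 r + v) <= u * z (t0 + L)%N j + v.
  exact: (spread_lower_bound P_ge0 P_diag P_edge (ltW g_gt0) a_conn (affine_rec u v)).
have zmax_le : zmax (t0 + L)%N <= zmax t0 - beta * (zmax t0 - z t0 r).
  suff le_j j : z (t0 + L)%N j <= zmax t0 - beta * (zmax t0 - z t0 r).
    exact: bigmax_le.
  suff : beta * (-1 * z t0 r + zmax t0) <= -1 * z (t0 + L)%N j + zmax t0 by lra.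
  apply: spread => i; suff : z t0 i <= zmax t0 by lra.
  exact: le_bigmax.
have zmin_ge : zmin t0 + beta * (z t0 r - zmin t0) <= zmin (t0 + L)%N.
  suff ge_j j : zmin t0 + beta * (z t0 r - zmin t0) <= z (t0 + L)%N j.
    exact: le_bigmin.
  suff : beta * (1 * z t0 r - zmin t0) <= 1 * z (t0 + L)%N j - zmin t0 by lra.
  apply: spread => i; suff : zmin t0 <= z t0 i by lra.
  exact: bigmin_le.
rewrite /diam; nra.
Qed.

Let diam_nonincr : {homo diam : s t / (s <= t)%N >-> t <= s}.
Proof. by move=> s t st; rewrite lerB ?zmax_nonincr ?zmin_nondecr. Qed.

Let consensus_value : exists ys, forall t j, `|z t j - ys| <= diam t.
Proof.
have zmin_le_zmax t : zmin t <= zmax t by rewrite -subr_ge0 diam_ge0.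
have [ys ys_in] := nested_intervals zmin_nondecr zmax_nonincr zmin_le_zmax.
exists ys => t j; have /andP[] := ys_in t.
have : zmin t <= z t j <= zmax t by rewrite bigmin_le le_bigmax.
by rewrite ler_norml /diam; lra.
Qed.

Lemma trajectory_geometric_consensus rho :
  0 < rho -> rho <= 1 -> 1 - beta <= rho ^+ L.+1 ->
  exists ys C, forall t j, `|z t j - ys| <= C * rho ^+ t.
Proof.
move=> rho_gt0 rho_le1 beta_le; have [ys ys_diam] := consensus_value.
have diam_period q : diam (q.+1 * L.+1)%N <= (1 - beta) * diam (q * L.+1)%N.
  apply: le_trans (diam_contract _); apply: diam_nonincr.
  by rewrite mulSnr leq_add2l.
exists ys, (diam 0%N / rho ^+ L.+1) => t j; apply: le_trans (ys_diam t j) _.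
have c_ge0 : 0 <= 1 - beta by rewrite subr_ge0.
exact: (geometric_rate_of_period (ltn0Sn L) c_ge0 rho_gt0 rho_le1 beta_le diam_ge0
  diam_nonincr diam_period).
Qed.

End Trajectory.

Theorem connected_geometric_consensus :
  exists2 rho : R, 0 < rho < 1 & geometric_consensus P rho.
Proof.
have beta_gt0 : 0 < beta by rewrite exprn_gt0.
have L_gt0 : 0 < L.+1%:R :> R by rewrite ltr0n.
(* Bernoulli: [(1 - beta / (2 (L + 1))) ^ (L + 1) >= 1 - beta / 2] *)
pose x := beta / (2 * L.+1%:R); pose rho := 1 - x.
have x_gt0 : 0 < x by rewrite divr_gt0 ?mulr_gt0.
have x_le : x <= 1 / 2.
  rewrite ler_pdivrMr ?mulr_gt0 //.
  have : 1 <= L.+1%:R :> R by rewrite ler1n.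
  move: beta_le1; nra.
have beta_le : 1 - beta <= rho ^+ L.+1.
  have x_le1 : x <= 1 by lra.
  apply: le_trans (bernoulli_ineq L.+1 (ltW x_gt0) x_le1).
  have -> : L.+1%:R * x = beta / 2 by rewrite /x; field; rewrite addrC natr1 pnatr_eq0.
  lra.
exists rho; first by apply/andP; split; rewrite /rho; lra.
move=> z z_rec; apply: (trajectory_geometric_consensus z_rec) => //; rewrite /rho; lra.
Qed.

End Consensus.

(** * Synchronization *)

Lemma vnorm_mulmx_le {R : realType} {n} {M : 'M[R]_n} {v : 'cV[R]_n} {b c : R} :
  0 <= b -> 0 <= c -> (forall i j, `|M i j| <= b) -> (forall j, `|v j 0| <= c) ->
  vnorm (M *m v) <= n%:R * b * c.
Proof.
move=> b_ge0 c_ge0 M_le v_le; apply: bigmax_le => [|i _]; first by rewrite !mulr_ge0.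
rewrite mxE; apply: le_trans (ler_norm_sum _ _ _) _.
rewrite -mulrA mulr_natl -[X in _ <= _ *+ X](card_ord n) -sumr_const.
by apply: ler_sum => j _; rewrite normrM ler_pM.
Qed.

Fixpoint consensus_iter {R : pzRingType} {N n} (P : nat -> 'M[R]_N)
    (y0 : 'I_N -> 'cV[R]_n) t : 'I_N -> 'cV[R]_n :=
  if t is s.+1 then fun k => \sum_j P s k j *: consensus_iter P y0 s j else y0.

Lemma consensus_iter_converges {R : realType} {N n} {P : nat -> 'M[R]_N} {rho : R}
    (y0 : 'I_N -> 'cV[R]_n) :
  0 <= rho -> geometric_consensus P rho ->
  exists (ys : 'cV[R]_n) (C : R), 0 <= C /\
    forall t k j, `|(consensus_iter P y0 t k - ys) j 0| <= C * rho ^+ t.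
Proof.
move=> rho_ge0 consP.
have coord (i : 'I_n) : exists p : R * R,
    forall t k, `|consensus_iter P y0 t k i 0 - p.1| <= p.2 * rho ^+ t.
  have [ys [C le_C]] := consP (fun t k => consensus_iter P y0 t k i 0)
    (fun t j => ltac:(by rewrite /= summxE; apply: eq_bigr => l _; rewrite !mxE)).
  by exists (ys, C).
have [p p_le] := fin_all_exists coord.
have [C C_ge0 le_C] := finite_norm_bound (fun i => (p i).2).
exists (\col_i (p i).1), C; split => // t k j; rewrite !mxE.
apply: le_trans (p_le j t k) _; apply: ler_wpM2r; first exact: exprn_ge0.
exact: le_trans (ler_norm _) (le_C j).
Qed.

Lemma expmx_consensus_iter {R : realType} {n N} {A : 'M[R]_n} {P : nat -> 'M[R]_N}
    {x : 'I_N -> nat -> 'cV[R]_n} :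
  (forall k t, x k t.+1 = A *m \sum_j P t k j *: x j t) ->
  forall t k, x k t = A ^+ t *m consensus_iter P (x^~ 0%N) t k.
Proof.
move=> x_rec; elim=> [|t IH] k; first by rewrite expr0 mul1mx.
rewrite x_rec exprS -mulmxA /= [in RHS]mulmx_sumr; congr (_ *m _).
by apply: eq_bigr => j _; rewrite IH scalemxAr.
Qed.

Theorem exp_synchronizes_of_consensus {R : realType} {n N} {A : 'M[R]_n}
    {P : nat -> 'M[R]_N} {rho : R} {x : 'I_N -> nat -> 'cV[R]_n} :
  eig_on_unit_circle A -> 0 <= rho -> rho < 1 -> geometric_consensus P rho ->
  (forall k t, x k t.+1 = A *m \sum_j P t k j *: x j t) ->
  exp_synchronizes A x.
Proof.
move=> eigA rho_ge0 rho_lt1 consP x_rec.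
have [ys [C [C_ge0 le_C]]] := consensus_iter_converges (x^~ 0%N) rho_ge0 consP.
have [mu mu_gt1 mu_rho] : exists2 mu : R, 1 < mu & mu * rho < 1.
  by exists (2 / (1 + rho)); [rewrite ltr_pdivlMr | rewrite mulrAC ltr_pdivrMr]; lra.
have mu_gt0 : 0 < mu by lra.
have [K K_ge0 le_K] := expmx_unit_circle_bounded eigA mu_gt1.
exists (fun t => A ^+ t *m ys); split; first by move=> t; rewrite exprS mulmxA.
exists (n%:R * K * C), (mu * rho); split; first by rewrite mulr_ge0 // ltW.
split => // k t; rewrite (expmx_consensus_iter x_rec) -mulmxBr.
apply: le_trans (vnorm_mulmx_le _ _ (le_K t) (le_C t k)) _.
- exact: mulr_ge0 K_ge0 (exprn_ge0 _ (ltW mu_gt0)).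
- exact: mulr_ge0 C_ge0 (exprn_ge0 _ rho_ge0).
have -> : n%:R * (K * mu ^+ t) * (C * rho ^+ t) = n%:R * K * C * (mu * rho) ^+ t.
  by rewrite exprMn; ring.
by [].
Qed.

(** * The closed loop *)

Lemma sum_delta_scale {R : pzRingType} {V : lmodType R} {I : finType} (k : I) (c : R)
    (v : I -> V) :
  \sum_j ((k == j)%:R * c) *: v j = c *: v k.
Proof.
rewrite (bigD1 k) //= eqxx mul1r big1 ?addr0 // => j /negPf jk.
by rewrite eq_sym jk mul0r scale0r.
Qed.

Definition consensus_gain {R : realType} {N} (a : nat -> 'M[R]_N) (eps : 'I_N -> R)
    (t : nat) : 'M[R]_N :=
  \matrix_(k, j) ((k == j)%:R * (1 - eps k * in_degree a t k) + eps k * a t k j).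

Section ConsensusGain.

Context {R : realType} {N : nat} {eta gamma theta : R} {a : nat -> 'M[R]_N}
  {eps : 'I_N -> R}.
Hypotheses (a_ok : adjacency_ok eta gamma a) (eps_gt0 : forall k, 0 < eps k)
  (eps_deg : forall k t, eps k * in_degree a t k <= theta) (theta_lt1 : theta < 1).

Let a_diag t k : a t k k = 0.
Proof. by case: a_ok => _ [_ /(_ t k k) []]. Qed.

Let a_ge0 t k j : 0 <= a t k j.
Proof.
case: a_ok => eta_gt0 [_ /(_ t k j) [_ [-> // | [eta_le _]]]].
exact: le_trans (ltW eta_gt0) eta_le.
Qed.

Lemma laplacian_entry t k j :
  laplacian a t k j = (k == j)%:R * in_degree a t k - a t k j.
Proof.
rewrite mxE; case: eqP => [<-|_]; first by rewrite mul1r a_diag subr0.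
by rewrite mul0r sub0r.
Qed.

Lemma consensus_gain_ge0 t k j : 0 <= consensus_gain a eps t k j.
Proof.
have deg_le1 : eps k * in_degree a t k <= 1 by rewrite (le_trans (eps_deg k t)) ?ltW.
rewrite mxE; apply: addr_ge0; apply: mulr_ge0; rewrite ?ler0n ?subr_ge0 ?a_ge0 //.
exact: ltW.
Qed.

Lemma consensus_gain_sum1 t k : \sum_j consensus_gain a eps t k j = 1.
Proof.
under eq_bigr do rewrite mxE.
rewrite big_split /= -mulr_sumr (bigD1 k) //= eqxx mul1r big1 ?addr0.
  by rewrite subrK.
by move=> j /negPf jk; rewrite eq_sym jk mul0r.
Qed.

Lemma consensus_gain_lower_bound : exists2 g : R, 0 < g &
  (forall t k, g <= consensus_gain a eps t k k) /\
  (forall t k j, eta <= a t k j -> g <= consensus_gain a eps t k j).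
Proof.
have eta_gt0 : 0 < eta by case: a_ok.
pose emin := \big[Num.min/1]_k eps k.
have emin_gt0 : 0 < emin by apply: lt_bigmin => // k _; apply: eps_gt0.
exists (Num.min (1 - theta) (emin * eta)); first by rewrite lt_min subr_gt0 theta_lt1 mulr_gt0.
split=> [t k | t k j a_kj]; rewrite mxE.
  by rewrite eqxx mul1r a_diag mulr0 addr0 ge_min lerD2l lerN2 eps_deg.
rewrite ge_min; apply/orP; right; apply: le_trans (_ : eps k * a t k j <= _).
  by apply: ler_pM; [exact: ltW | exact: ltW | exact: bigmin_le |].
by rewrite lerDr mulr_ge0 // subr_ge0 (le_trans (eps_deg k t)) ?ltW.
Qed.

Lemma closed_loop_consensus {n : nat} {A B : 'M[R]_n} {x : 'I_N -> nat -> 'cV[R]_n} :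
  B \in unitmx ->
  (forall k t, x k t.+1 =
     A *m x k t + B *m (- eps k *: (invmx B *m A *m
        (\sum_j laplacian a t k j *: x j t)))) ->
  forall k t, x k t.+1 = A *m \sum_j consensus_gain a eps t k j *: x j t.
Proof.
move=> B_unit x_rec k t; rewrite x_rec -scalemxAr !mulmxA mulmxV // mul1mx.
rewrite scalemxAr -mulmxDr; congr (_ *m _).
under eq_bigr do rewrite laplacian_entry scalerBl.
under [RHS]eq_bigr do rewrite mxE scalerDl -scalerA.
rewrite sumrB big_split /= !sum_delta_scale -scaler_sumr scaleNr scalerBr opprB.
by rewrite scalerBl scale1r -scalerA addrA addrAC.
Qed.

End ConsensusGain.

Theorem lemma2 (R : realType) (n N : nat) (A B : 'M[R]_n)
    (eta gamma : R) (a : nat -> 'M[R]_N) (eps : 'I_N -> R)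
    (x : 'I_N -> nat -> 'cV[R]_n) :
  B \in unitmx ->
  eig_on_unit_circle A ->
  adjacency_ok eta gamma a ->
  uniformly_connected eta a ->
  (forall k, 0 < eps k) ->
  (exists theta : R, theta < 1 /\
     forall k t, eps k * in_degree a t k <= theta) ->
  (forall k t, x k t.+1 =
     A *m x k t + B *m (- eps k *: (invmx B *m A *m
        (\sum_j laplacian a t k j *: x j t)))) ->
  exp_synchronizes A x.
Proof.
move=> B_unit eigA a_ok [T [r [_ a_conn]]] eps_gt0 [theta [theta_lt1 eps_deg]] x_rec.
have gain_ge0 := consensus_gain_ge0 a_ok eps_gt0 eps_deg theta_lt1.
have [g g_gt0 [gain_diag gain_edge]] :=
  consensus_gain_lower_bound a_ok eps_gt0 eps_deg theta_lt1.
have [rho /andP[rho_gt0 rho_lt1] consP] := connected_geometric_consensus gain_ge0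
  consensus_gain_sum1 gain_diag gain_edge g_gt0 a_conn.
exact: exp_synchronizes_of_consensus eigA (ltW rho_gt0) rho_lt1 consP
  (closed_loop_consensus a_ok B_unit x_rec).
Qed.
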